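(* Let $M$ be a pointed metric space which is not both bounded and uniformly discrete (i.e. $M$ is unbounded or $\inf\{d(x,y):x,y\in M,\ x\neq y\}=0$). Then $\mathcal F(M)\widehat{\otimes}_\pi X$ is octahedral for every non-zero Banach space $X$.
   Context: All Banach spaces are real. $\mathcal F(M)$ is the Lipschitz-free space over the pointed metric space $M$ (the closed linear span of the evaluation functionals $\delta_p$, $p\in M$, in $\mathrm{Lip}_0(M)^*$, where $\mathrm{Lip}_0(M)$ is the space of real Lipschitz functions vanishing at the base point with the Lipschitz-constant norm), and $\widehat{\otimes}_\pi$ is the projective tensor product. A metric space is uniformly discrete if $\inf\{d(x,y):x\neq y\}>0$. A Banach space $Z$ is octahedral if for every $x_1,\dots,x_n\in S_Z$ and $\varepsilon>0$ there is $y\in S_Z$ with $\|x_i-y\|\ge 2-\varepsilon$ for all $i=1,\dots,n$. *)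

From HB Require Import structures.
From mathcomp Require Import all_boot all_order all_algebra.
From mathcomp Require Import all_classical all_reals all_analysis.
Set Implicit Arguments. Unset Strict Implicit. Unset Printing Implicit Defensive.
Import Order.TTheory GRing.Theory Num.Theory.
Import numFieldNormedType.Exports.
Local Open Scope classical_set_scope.
Local Open Scope ring_scope.

Section Defs.
Variable R : realType.

Definition is_metric (M : Type) (d : M -> M -> R) : Prop :=
  [/\ forall x y, 0 <= d x y,
      forall x y, d x y = 0 <-> x = y,
      forall x y, d x y = d y x &
      forall x y z, d x z <= d x y + d y z].

Definition bounded_metric (M : Type) (d : M -> M -> R) : Prop :=
  exists C : R, forall x y, d x y <= C.

Definition uniformly_discrete (M : Type) (d : M -> M -> R) : Prop :=
  exists e : R, 0 < e /\ forall x y, x <> y -> e <= d x y.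

(* A finite formal sum  sum_k delta_{k.1} (x) k.2  is encoded as a list of
   pairs; coefficient of the point p. *)
Definition tcoef (M : Type) (V : zmodType) (u : seq (M * V)) (p : M) : V :=
  \sum_(k <- u) (if `[< k.1 = p >] then k.2 else 0).

(* Norm in F(M) (as an element of Lip_0(M)^* ) of sum_k k.2 delta_{k.1}. *)
Definition free_norm (M : Type) (d : M -> M -> R) (base : M)
    (mu : seq (M * R)) : R :=
  sup [set r | exists f : M -> R, f base = 0 /\
         (forall x y, `|f x - f y| <= d x y) /\
         r = \sum_(k <- mu) k.2 * f k.1].

(* Projective norm of the tensor sum_k delta_{k.1} (x) k.2 in
   span{delta_p} (x) X  ( = the algebraic tensor product, delta_base = 0 and
   the delta_p, p <> base, being linearly independent ):
   infimum of sum_i ||mu_i||_F ||x_i|| over all representations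
   u = sum_i mu_i (x) x_i with mu_i in span{delta_p}. *)
Definition proj_norm (M : Type) (d : M -> M -> R) (base : M)
    (X : normedModType R) (u : seq (M * X)) : R :=
  inf [set r | exists reps : seq (seq (M * R) * X),
         (forall p, p <> base ->
            tcoef u p = \sum_(i <- reps) (tcoef i.1 p) *: i.2) /\
         r = \sum_(i <- reps) free_norm d base i.1 * `|i.2|].

Definition tsub (M : Type) (X : zmodType) (u v : seq (M * X)) : seq (M * X) :=
  u ++ [seq (k.1, - k.2) | k <- v].

(* The completion F(M) ^(x)_pi X, realised as Cauchy sequences of elements of
   the dense subspace span{delta_p} (x) X; norms/distances are limits. *)
Section Completion.
Variables (T : Type) (sub : T -> T -> T) (nrm : T -> R).

Definition cauchy_seq (u : nat -> T) : Prop :=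
  forall e : R, 0 < e -> exists N : nat, forall m n : nat,
    (N <= m)%N -> (N <= n)%N -> nrm (sub (u m) (u n)) < e.

Definition cnorm (u : nat -> T) : R := limn (fun n => nrm (u n)).

Definition cdist (u v : nat -> T) : R := limn (fun n => nrm (sub (u n) (v n))).

Definition octahedral_completion : Prop :=
  forall (n : nat) (x : 'I_n -> nat -> T),
    (forall i, cauchy_seq (x i) /\ cnorm (x i) = 1) ->
    forall eps : R, 0 < eps ->
    exists y : nat -> T, [/\ cauchy_seq y, cnorm y = 1 &
      forall i, 2 - eps <= cdist (x i) y].
End Completion.

Definition octahedral_free_ptensor (M : Type) (d : M -> M -> R) (base : M)
    (X : normedModType R) : Prop :=
  octahedral_completion (@tsub M X) (@proj_norm M d base X).

End Defs.

From HB Require Import structures.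
From mathcomp Require Import all_boot all_order all_algebra.
From mathcomp Require Import all_classical all_reals all_analysis.
From mathcomp Require Import ring lra.
Import Order.TTheory GRing.Theory Num.Theory.
Import numFieldNormedType.Exports.
Local Open Scope classical_set_scope.
Local Open Scope ring_scope.
Set Implicit Arguments. Unset Strict Implicit. Unset Printing Implicit Defensive.

(* Given finitely many tensors [u_i], supported on a finite set [L] of points, and
   [del > 0], we find a norm-one elementary tensor [m (x) e], [m] a molecule, with
   [(1 + del) |u_i - m (x) e| >= |u_i| + 1 - del]; density of finitely supported
   tensors then gives octahedrality of the completion.
   If [M] is unbounded, [m = m_{x,base}] with [x] very far from [L]. Otherwise [M]
   has distinct points at arbitrarily small distance, and [m = m_{x,y}] with [d x y]
   tiny compared to the distances from [x] to the points of [L] other than the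
   nearest one [z].
   The lower bound comes from a Lipschitz cutoff [phi], logarithmic in the distance,
   equal to [1] on [L] and [0] near the molecule: the map
   [mu |-> phi mu + <1 - phi, mu> delta_z] together with a functional [g] peaking on
   [m] has norm at most [1 + del], which splits the projective norm of
   [u_i - m (x) e] into [|u_i| + |<g, m>| >= |u_i| + 1 - del]. *)

Section FormalSums.
Variables (R : realType) (M : Type).

(* [tpair u G] is [(G (x) id) u] for a function [G : M -> R]. *)
Definition tpair (V : lmodType R) (u : seq (M * V)) (G : M -> R) : V :=
  \sum_(k <- u) G k.1 *: k.2.

Definition tneg (V : zmodType) (u : seq (M * V)) : seq (M * V) :=
  [seq (k.1, - k.2) | k <- u].

Lemma tcoef_nil (V : zmodType) p : tcoef (@nil (M * V)) p = 0.
Proof. by rewrite /tcoef big_nil. Qed.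

Lemma tcoef_cons (V : zmodType) (k : M * V) u p :
  tcoef (k :: u) p = (if `[< k.1 = p >] then k.2 else 0) + tcoef u p.
Proof. by rewrite /tcoef big_cons. Qed.

Lemma tcoef_cat (V : zmodType) (u v : seq (M * V)) p :
  tcoef (u ++ v) p = tcoef u p + tcoef v p.
Proof. by rewrite /tcoef big_cat. Qed.

Lemma tcoef_tneg (V : zmodType) (u : seq (M * V)) p :
  tcoef (tneg u) p = - tcoef u p.
Proof.
rewrite /tcoef big_map -sumrN; apply: eq_bigr => k _ /=.
by case: asboolP; rewrite ?oppr0.
Qed.

Lemma tcoef_tsub (V : zmodType) (u v : seq (M * V)) p :
  tcoef (tsub u v) p = tcoef u p - tcoef v p.
Proof. by rewrite /tsub tcoef_cat -/(tneg v) tcoef_tneg. Qed.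

Lemma tcoef_unsupported (V : zmodType) (P : M -> Prop) (u : seq (M * V)) p :
  all (fun k => `[< P k.1 >]) u -> ~ P p -> tcoef u p = 0.
Proof.
move=> Pu Pp; elim: u Pu => [|k u IH] /=; first by rewrite tcoef_nil.
move=> /andP[/asboolP Pk Pu]; rewrite tcoef_cons IH // addr0.
by case: asboolP => // E; exfalso; apply: Pp; rewrite -E.
Qed.

Lemma tpair_nil (V : lmodType R) G : tpair (@nil (M * V)) G = 0.
Proof. by rewrite /tpair big_nil. Qed.

Lemma tpair_cons (V : lmodType R) (k : M * V) u G :
  tpair (k :: u) G = G k.1 *: k.2 + tpair u G.
Proof. by rewrite /tpair big_cons. Qed.

Lemma tpair_tsub (V : lmodType R) (u v : seq (M * V)) G :
  tpair (tsub u v) G = tpair u G - tpair v G.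
Proof.
rewrite /tsub /tpair big_cat big_map -sumrN; congr (_ + _).
by apply: eq_bigr => k _; rewrite scalerN.
Qed.

Lemma tpair_tcoef (V : lmodType R) (u : seq (M * V)) G (T : seq {classic M}) :
  uniq T -> all (fun k => (k.1 : {classic M}) \in T) u ->
  tpair u G = \sum_(q <- T) G q *: tcoef u q.
Proof.
move=> uT; elim: u => [|k u IH] Hu.
  by rewrite tpair_nil; under eq_bigr do rewrite tcoef_nil scaler0; rewrite big1.
move: Hu => /= /andP[kT Hu].
rewrite tpair_cons IH //.
under [in RHS]eq_bigr do rewrite tcoef_cons scalerDr.
rewrite big_split /=; congr (_ + _).
rewrite (bigD1_seq (k.1 : {classic M})) //= big1 ?addr0.
  by case: asboolP => // /(_ erefl).
move=> q qk; case: asboolP => E; last by rewrite scaler0.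
by move: qk; rewrite -E eqxx.
Qed.

Lemma tpair_supported (V : lmodType R) (P : M -> Prop) (u : seq (M * V)) G z :
  all (fun k => `[< P k.1 >]) u -> (forall s, P s -> s <> z -> G s = 0) ->
  tpair u G = G z *: tcoef u z.
Proof.
move=> Pu HG; elim: u Pu => [|k u IH] /=; first by rewrite tpair_nil tcoef_nil scaler0.
move=> /andP[/asboolP Pk Pu]; rewrite tpair_cons tcoef_cons scalerDr IH //.
congr (_ + _); case: asboolP => [<-//|kz]; by rewrite HG // scale0r scaler0.
Qed.

Definition fpair (mu : seq (M * R)) (f : M -> R) : R := \sum_(k <- mu) k.2 * f k.1.

Lemma fpairN mu f : fpair mu (fun x => - f x) = - fpair mu f.
Proof. by rewrite /fpair -sumrN; apply: eq_bigr => k _; rewrite mulrN. Qed.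

Lemma fpairD mu f g : fpair mu (fun q => f q + g q) = fpair mu f + fpair mu g.
Proof. by rewrite /fpair -big_split; apply: eq_bigr => k _; rewrite mulrDr. Qed.

Lemma fpairZ mu c f : fpair mu (fun q => c * f q) = c * fpair mu f.
Proof. by rewrite /fpair mulr_sumr; apply: eq_bigr => k _; rewrite mulrCA. Qed.

Lemma fpair_tcoef (mu : seq (M * R)) f (T : seq {classic M}) :
  uniq T -> all (fun k => (k.1 : {classic M}) \in T) mu ->
  fpair mu f = \sum_(q <- T) f q * tcoef mu q.
Proof.
move=> uT Tmu; rewrite -(tpair_tcoef (u := mu : seq (M * R^o)) f uT Tmu).
by apply: eq_bigr => k _; rewrite mulrC.
Qed.

End FormalSums.

Section FreeNorm.
Variables (R : realType) (M : Type) (d : M -> M -> R) (base : M).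
Hypothesis Hd : is_metric d.

Lemma metric_ge0 x y : 0 <= d x y. Proof. by case: Hd. Qed.
Lemma metricC x y : d x y = d y x. Proof. by case: Hd. Qed.
Lemma metric_triangle x y z : d x z <= d x y + d y z. Proof. by case: Hd. Qed.
Lemma metricxx x : d x x = 0. Proof. by case: Hd => _ H _ _; apply/H. Qed.

Lemma metric_gt0 x y : x <> y -> 0 < d x y.
Proof. by case: Hd => _ H _ _ xy; rewrite lt_def metric_ge0 andbT; apply/eqP => /H. Qed.

Lemma metric_lip a b c : `|d a c - d b c| <= d a b.
Proof.
rewrite ler_norml; apply/andP; split; last by rewrite lerBlDr metric_triangle.
by rewrite lerNl opprB lerBlDr (metricC a b) metric_triangle.
Qed.

Definition lip_ball (f : M -> R) : Prop :=
  f base = 0 /\ forall x y, `|f x - f y| <= d x y.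

Lemma lip_ball0 : lip_ball (fun=> 0).
Proof. by split=> // x y; rewrite subr0 normr0 metric_ge0. Qed.

Lemma lip_ballN f : lip_ball f -> lip_ball (fun x => - f x).
Proof. by case=> f0 fL; split=> [|x y]; rewrite ?f0 ?oppr0 // -opprD normrN. Qed.

Lemma lip_ball_le_dist f x : lip_ball f -> `|f x| <= d x base.
Proof. by case=> f0 fL; have := fL x base; rewrite f0 subr0. Qed.

Definition free_pairings (mu : seq (M * R)) : set R :=
  [set r | exists f : M -> R, f base = 0 /\
     (forall x y, `|f x - f y| <= d x y) /\ r = fpair mu f].

Lemma free_pairings_ub mu : has_ubound (free_pairings mu).
Proof.
exists (\sum_(k <- mu) `|k.2| * d k.1 base) => r [f [f0 [fL ->]]].
apply: le_trans (ler_norm _) _; apply: le_trans (ler_norm_sum _ _ _) _.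
by apply: ler_sum => k _; rewrite normrM ler_wpM2l // lip_ball_le_dist.
Qed.

Lemma free_norm_ge mu f : lip_ball f -> fpair mu f <= free_norm d base mu.
Proof. by case=> f0 fL; apply: ub_le_sup; [exact: free_pairings_ub | exists f]. Qed.

Lemma free_norm_le mu C :
  (forall f, lip_ball f -> fpair mu f <= C) -> free_norm d base mu <= C.
Proof.
move=> H; apply: ge_sup => [|r [f [f0 [fL ->]]]]; last exact: H.
by exists 0, (fun=> 0); split=> //; split; [case: lip_ball0|
  rewrite /fpair big1 // => k _; rewrite mulr0].
Qed.

Lemma free_norm_ge0 mu : 0 <= free_norm d base mu.
Proof.
by have := free_norm_ge mu lip_ball0; rewrite /fpair big1 // => k _; rewrite mulr0.
Qed.

Lemma free_norm_ge_abs mu f : lip_ball f -> `|fpair mu f| <= free_norm d base mu.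
Proof.
move=> bf; rewrite ler_norml free_norm_ge // andbT lerNl -fpairN.
exact/free_norm_ge/lip_ballN.
Qed.

End FreeNorm.

Section ProjNorm.
Variables (R : realType) (M : Type) (d : M -> M -> R) (base : M).
Hypothesis Hd : is_metric d.
Variable X : normedModType R.
Local Notation pn := (@proj_norm R M d base X).

Definition represents (u : seq (M * X)) (reps : seq (seq (M * R) * X)) : Prop :=
  forall p, p <> base -> tcoef u p = \sum_(i <- reps) tcoef i.1 p *: i.2.

Definition rep_cost (reps : seq (seq (M * R) * X)) : R :=
  \sum_(i <- reps) free_norm d base i.1 * `|i.2|.

Lemma rep_cost_ge0 reps : 0 <= rep_cost reps.
Proof. by apply: sumr_ge0 => i _; rewrite mulr_ge0 ?free_norm_ge0. Qed.

Definition delta_rep (u : seq (M * X)) : seq (seq (M * R) * X) :=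
  [seq ([:: (k.1, 1)], k.2) | k <- u].

Lemma represents_delta u : represents u (delta_rep u).
Proof.
move=> p _; rewrite big_map /tcoef; apply: eq_bigr => k _.
by rewrite big_cons big_nil addr0 /=; case: asboolP => _; rewrite ?scale1r ?scale0r.
Qed.

Lemma proj_norm_le u reps : represents u reps -> pn u <= rep_cost reps.
Proof.
move=> rep; apply: ge_inf; last by exists reps.
by exists 0 => r [rp [_ ->]]; apply: rep_cost_ge0.
Qed.

Lemma proj_norm_ge u C :
  (forall reps, represents u reps -> C <= rep_cost reps) -> C <= pn u.
Proof.
move=> H; apply: lb_le_inf => [|r [rp [rep ->]]]; last exact: H.
by exists (rep_cost (delta_rep u)), (delta_rep u); split; first exact: represents_delta.
Qed.

Lemma proj_norm_ge0 u : 0 <= pn u.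
Proof. by apply: proj_norm_ge => reps _; apply: rep_cost_ge0. Qed.

Lemma proj_norm_ext u v : (forall p, p <> base -> tcoef u p = tcoef v p) -> pn u = pn v.
Proof.
move=> uv; apply/eqP; rewrite eq_le; apply/andP; split.
  by apply: proj_norm_ge => reps rep; apply: proj_norm_le => p pb; rewrite uv // rep.
by apply: proj_norm_ge => reps rep; apply: proj_norm_le => p pb; rewrite -uv // rep.
Qed.

Lemma proj_norm_cat u v : pn (u ++ v) <= pn u + pn v.
Proof.
rewrite -lerBlDr; apply: proj_norm_ge => ru repu; rewrite lerBlDr addrC -lerBlDr.
apply: proj_norm_ge => rv repv; rewrite lerBlDr.
have rep : represents (u ++ v) (ru ++ rv).
  by move=> p pb; rewrite tcoef_cat big_cat /= repu // repv.
by apply: le_trans (proj_norm_le rep) _; rewrite /rep_cost big_cat /= addrC.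
Qed.

Lemma proj_norm_tneg_le u : pn (tneg u) <= pn u.
Proof.
apply: proj_norm_ge => reps rep.
have repN : represents (tneg u) [seq (i.1, - i.2) | i <- reps].
  move=> p pb; rewrite tcoef_tneg rep // big_map -sumrN.
  by apply: eq_bigr => i _; rewrite scalerN.
apply: le_trans (proj_norm_le repN) _; rewrite /rep_cost big_map.
by under eq_bigr do rewrite normrN.
Qed.

Lemma proj_norm_tsubC u v : pn (tsub u v) = pn (tsub v u).
Proof.
suff le_uv a b : pn (tsub a b) <= pn (tsub b a) by apply/eqP; rewrite eq_le !le_uv.
apply: le_trans (proj_norm_tneg_le _); rewrite le_eqVlt; apply/orP; left; apply/eqP.
by apply: proj_norm_ext => p _; rewrite tcoef_tneg !tcoef_tsub opprB.
Qed.

Lemma proj_norm_tsub_triangle u v w : pn (tsub u w) <= pn (tsub u v) + pn (tsub v w).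
Proof.
rewrite -(proj_norm_ext (u := tsub u v ++ tsub v w)); first exact: proj_norm_cat.
by move=> p _; rewrite tcoef_cat !tcoef_tsub addrA subrK.
Qed.

Lemma proj_norm_dist u v : `|pn u - pn v| <= pn (tsub u v).
Proof.
have le_sub a b : pn a <= pn (tsub a b) + pn b.
  rewrite -(proj_norm_ext (u := tsub a b ++ b)); first exact: proj_norm_cat.
  by move=> p _; rewrite tcoef_cat !tcoef_tsub subrK.
rewrite ler_norml lerBlDr le_sub andbT lerNl opprB lerBlDr proj_norm_tsubC.
exact: le_sub.
Qed.

Lemma proj_norm_tsubxx u : pn (tsub u u) = 0.
Proof.
apply/eqP; rewrite eq_le proj_norm_ge0 andbT.
have rep : represents (tsub u u) [::] by move=> p _; rewrite big_nil tcoef_tsub subrr.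
by apply: le_trans (proj_norm_le rep) _; rewrite /rep_cost big_nil.
Qed.

Lemma tpair_rep_aux (reps : seq (seq (M * R) * X)) G (T : seq {classic M}) :
  uniq T -> all (fun i => all (fun k => (k.1 : {classic M}) \in T) i.1) reps ->
  \sum_(i <- reps) fpair i.1 G *: i.2 =
  \sum_(q <- T) G q *: \sum_(i <- reps) tcoef i.1 q *: i.2.
Proof.
move=> uT; elim: reps => [|i reps IH] /=.
  by move=> _; rewrite big_nil big1 // => q _; rewrite big_nil scaler0.
move=> /andP[Ti Treps]; rewrite big_cons IH //.
under [in RHS]eq_bigr do rewrite big_cons scalerDr.
rewrite big_split /= (fpair_tcoef G uT Ti) scaler_suml; congr (_ + _).
by apply: eq_bigr => q _; rewrite scalerA.
Qed.

Lemma tpair_rep (u : seq (M * X)) reps G : G base = 0 -> represents u reps ->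
  tpair u G = \sum_(i <- reps) fpair i.1 G *: i.2.
Proof.
move=> G0 rep.
set S := flatten [seq [seq (k.1 : {classic M}) | k <- i.1] | i <- reps].
set T : seq {classic M} := undup ([seq (k.1 : {classic M}) | k <- u] ++ S).
have uT : uniq T by apply: undup_uniq.
rewrite (tpair_rep_aux G uT); last first.
  apply/allP => i ireps; apply/allP => k ki.
  rewrite mem_undup mem_cat; apply/orP; right.
  by apply/flatten_mapP; exists i => //; apply: map_f.
rewrite (tpair_tcoef _ uT); last first.
  by apply/allP => k ku; rewrite mem_undup mem_cat map_f.
apply: eq_bigr => q _.
by case: (asboolP (q = base)) => [->|qb]; rewrite ?G0 ?scale0r ?rep.
Qed.

Lemma norm_tpair_le_proj_norm (u : seq (M * X)) G :
  lip_ball d base G -> `|tpair u G| <= pn u.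
Proof.
move=> bG; apply: proj_norm_ge => reps rep.
rewrite (tpair_rep bG.1 rep); apply: le_trans (ler_norm_sum _ _ _) _.
apply: ler_sum => i _; rewrite normrZ ler_wpM2r //.
exact: free_norm_ge_abs.
Qed.

(* The elementary tensor [m_xy (x) e] with [m_xy = (delta_x - delta_y) / d x y]. *)
Definition molecule (x y : M) (e : X) : seq (M * X) :=
  [:: (x, (d x y)^-1 *: e); (y, - ((d x y)^-1 *: e))].

Lemma tcoef_molecule x y e p : tcoef (molecule x y e) p =
  (if `[< x = p >] then (d x y)^-1 *: e else 0) +
  (if `[< y = p >] then - ((d x y)^-1 *: e) else 0).
Proof. by rewrite /molecule !tcoef_cons tcoef_nil addr0. Qed.

Lemma tpair_molecule x y e G : tpair (molecule x y e) G = ((G x - G y) / d x y) *: e.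
Proof.
by rewrite /molecule !tpair_cons tpair_nil addr0 /= scalerN -scalerBl scalerA mulrBl.
Qed.

Lemma proj_norm_molecule x y e : x <> y -> `|e| = 1 -> pn (molecule x y e) = 1.
Proof.
move=> xy e1; have dxy := metric_gt0 Hd xy.
apply/eqP; rewrite eq_le; apply/andP; split.
  pose mu : seq (M * R) := [:: (x, 1); (y, -1)].
  have rep : represents (molecule x y e) [:: (mu, (d x y)^-1 *: e)].
    move=> p _; rewrite big_cons big_nil addr0 tcoef_molecule /= !tcoef_cons tcoef_nil.
    by case: (asboolP (x = p)) => _; case: (asboolP (y = p)) => _;
      rewrite ?addr0 ?add0r ?scalerDl ?scale1r ?scaleN1r ?scale0r.
  apply: le_trans (proj_norm_le rep) _; rewrite /rep_cost big_cons big_nil addr0 /=.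
  rewrite normrZ e1 mulr1 ger0_norm ?invr_ge0 ?(metric_ge0 Hd) //.
  rewrite -ler_pdivlMr ?invr_gt0 // invrK mul1r.
  apply: (free_norm_le Hd) => f [_ fL]; rewrite /fpair !big_cons big_nil /= addr0.
  by rewrite mul1r mulN1r; apply: le_trans (ler_norm _) (fL x y).
have bG : lip_ball d base (fun q => d q y - d base y).
  by split=> [|a b]; rewrite ?subrr // opprB addrA subrK (metric_lip Hd).
apply: le_trans (norm_tpair_le_proj_norm _ bG).
rewrite tpair_molecule normrZ e1 mulr1 opprB addrA subrK (metricxx Hd) subr0.
by rewrite mulfV ?gt_eqF // normr1.
Qed.

End ProjNorm.

Section Reweight.
Variables (R : realType) (M : Type) (d : M -> M -> R) (base : M).
Hypothesis Hd : is_metric d.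
Variable X : normedModType R.
Local Notation pn := (@proj_norm R M d base X).

(* [reweight phi psi z mu] is the measure [phi mu + <psi, mu> delta_z]. *)
Definition reweight (phi psi : M -> R) (z : M) (mu : seq (M * R)) : seq (M * R) :=
  [seq (k.1, phi k.1 * k.2) | k <- mu] ++ [seq (z, psi k.1 * k.2) | k <- mu].

Lemma fpair_reweight phi psi z mu f :
  fpair (reweight phi psi z mu) f = fpair mu (fun q => phi q * f q + psi q * f z).
Proof.
rewrite /reweight /fpair big_cat !big_map /=.
under [RHS]eq_bigr do rewrite mulrDr.
by rewrite big_split /=; congr (_ + _); apply: eq_bigr => k _; rewrite mulrCA mulrA.
Qed.

Lemma tcoef_reweight phi psi z mu p : tcoef (reweight phi psi z mu) p =
  phi p * tcoef mu p + (if `[< z = p >] then fpair mu psi else 0).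
Proof.
rewrite /reweight tcoef_cat /tcoef !big_map /=; congr (_ + _).
  by rewrite mulr_sumr; apply: eq_bigr => k _; case: asboolP => [->|_]; rewrite ?mulr0.
case: asboolP => _; last by rewrite big1.
by apply: eq_bigr => k _; rewrite mulrC.
Qed.

(* The adjoint of [reweight phi psi z], perturbed by [+-g], maps the unit ball
   of [Lip_0(M)] into the ball of radius [1 + del]. *)
Definition reweight_contractive (phi psi : M -> R) (z : M) (g : M -> R) (del : R) :=
  forall f, lip_ball d base f -> forall s : R, `|s| = 1 ->
    lip_ball d base (fun q => (1 + del)^-1 * (phi q * f q + psi q * f z + s * g q)).

Lemma free_norm_reweight phi psi z g del mu : 0 <= del ->
  reweight_contractive phi psi z g del ->
  free_norm d base (reweight phi psi z mu) + `|fpair mu g|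
    <= (1 + del) * free_norm d base mu.
Proof.
move=> del0 contr; rewrite -lerBrDr; apply: (free_norm_le Hd) => f bf.
rewrite lerBrDr fpair_reweight.
have [s [s1 ->]] : exists s : R, `|s| = 1 /\ `|fpair mu g| = s * fpair mu g.
  have [g0|g0] := lerP 0 (fpair mu g).
    by exists 1; rewrite normr1 mul1r ger0_norm.
  by exists (-1); rewrite normrN1 mulN1r ltr0_norm.
have := free_norm_ge mu (contr f bf s s1); rewrite fpairZ.
have del1 : 0 < 1 + del by rewrite ltr_pwDl.
by rewrite -(ler_pM2l del1) mulrA mulfV ?gt_eqF // mul1r !fpairD fpairZ.
Qed.

Lemma proj_norm_reweight (u w : seq (M * X)) phi psi z g del : 0 <= del ->
  psi base = 0 -> g base = 0 -> reweight_contractive phi psi z g del ->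
  (forall p, p <> base ->
     tcoef u p = phi p *: tcoef w p + (if `[< z = p >] then tpair w psi else 0)) ->
  pn u + `|tpair w g| <= (1 + del) * pn w.
Proof.
move=> del0 psi0 g0 contr uw.
have del1 : 0 < 1 + del by rewrite ltr_pwDl.
rewrite -ler_pdivrMl //; apply: proj_norm_ge => reps rep; rewrite ler_pdivrMl //.
have rep' : represents base u [seq (reweight phi psi z i.1, i.2) | i <- reps].
  move=> p pb; rewrite uw // big_map /=.
  under eq_bigr do rewrite tcoef_reweight scalerDl -scalerA.
  rewrite big_split /= -scaler_sumr -rep //; congr (_ + _).
  case: asboolP => _; last by rewrite big1 // => i _; rewrite scale0r.
  by rewrite (tpair_rep psi0 rep).
apply: le_trans (lerD (proj_norm_le Hd rep') (lexx _)) _.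
rewrite (tpair_rep g0 rep); apply: le_trans (lerD (lexx _) (ler_norm_sum _ _ _)) _.
rewrite /rep_cost big_map /= -big_split /= mulr_sumr; apply: ler_sum => i _.
by rewrite normrZ -mulrDl mulrA ler_wpM2r // free_norm_reweight.
Qed.

Definition cocutoff (phi : M -> R) (q : M) : R := if `[< q = base >] then 0 else 1 - phi q.

Section SupportedTensor.
Variables (P : M -> Prop) (u : seq (M * X)).
Hypotheses (Pbase : P base) (Pu : all (fun k => `[< P k.1 >]) u).
Variables (x y z : M) (e : X).
Hypotheses (nPx : ~ P x) (Pyz : P y -> y = z).

Lemma tcoef_reweight_tsub_molecule phi : (forall s, P s -> s <> z -> phi s = 1) ->
  phi x = 0 -> (y <> base -> phi y = 0) -> (z <> base -> phi z = 0) ->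
  forall p, p <> base -> tcoef u p =
    phi p *: tcoef (tsub u (molecule d x y e)) p +
    (if `[< z = p >] then tpair (tsub u (molecule d x y e)) (cocutoff phi) else 0).
Proof.
move=> phi1 phix phiy phiz p pb; rewrite tcoef_tsub tcoef_molecule.
have xb : x <> base by move=> E; apply: nPx; rewrite E.
case: (asboolP (z = p)) => [zp|zp].
  subst p; rewrite phiz // scale0r add0r tpair_tsub tpair_molecule.
  rewrite (tpair_supported (z := z) Pu); last first.
    by move=> s Ps sz; rewrite /cocutoff; case: asboolP => // _; rewrite phi1 // subrr.
  have yb : y <> base by move=> E; apply: pb; rewrite -Pyz // E.
  rewrite /cocutoff; do 3 case: asboolP => // _.
  by rewrite phiz // phix phiy // subr0 subrr mul0r scale0r subr0 scale1r.
rewrite addr0; case: (asboolP (P p)) => [Pp|nPp].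
  have pz : p <> z by move=> E; apply: zp; rewrite E.
  rewrite phi1 // scale1r; case: asboolP => [E|_]; first by case: nPx; rewrite E.
  by case: asboolP => [E|_]; [case: zp; rewrite -Pyz E | rewrite addr0 subr0].
rewrite (tcoef_unsupported Pu nPp) sub0r.
case: asboolP => [<-|_]; first by rewrite phix scale0r.
by case: asboolP => [E|_]; [rewrite -E phiy ?scale0r // E | rewrite addr0 oppr0 scaler0].
Qed.

Lemma tpair_tsub_molecule_ge g del : `|e| = 1 -> x <> y -> del <= 1 ->
  (forall s, P s -> g s = 0) -> (1 - del) * d x y <= g x - g y ->
  1 - del <= `|tpair (tsub u (molecule d x y e)) g|.
Proof.
move=> e1 xy del1 g0 gxy.
rewrite tpair_tsub (tpair_supported (z := z) Pu); last by move=> s Ps _; apply: g0.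
have -> : g z *: tcoef u z = 0.
  case: (asboolP (P z)) => [Pz|nPz]; first by rewrite g0 // scale0r.
  by rewrite (tcoef_unsupported Pu nPz) scaler0.
rewrite sub0r normrN tpair_molecule normrZ e1 mulr1.
have dxy := metric_gt0 Hd xy.
rewrite ger0_norm; first by rewrite ler_pdivlMr.
apply: divr_ge0 (ltW dxy); apply: le_trans gxy.
by apply: mulr_ge0 (ltW dxy); rewrite subr_ge0.
Qed.

Lemma proj_norm_tsub_molecule_ge phi g del : 0 <= del -> del <= 1 ->
  `|e| = 1 -> x <> y ->
  (forall s, P s -> s <> z -> phi s = 1) ->
  phi x = 0 -> (y <> base -> phi y = 0) -> (z <> base -> phi z = 0) ->
  (forall s, P s -> g s = 0) -> (1 - del) * d x y <= g x - g y ->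
  reweight_contractive phi (cocutoff phi) z g del ->
  pn u + (1 - del) <= (1 + del) * pn (tsub u (molecule d x y e)).
Proof.
move=> del0 del1 e1 xy phi1 phix phiy phiz g0 gxy contr.
have cophi0 : cocutoff phi base = 0 by rewrite /cocutoff; case: asboolP.
apply: le_trans (proj_norm_reweight del0 cophi0 (g0 _ Pbase) contr
  (tcoef_reweight_tsub_molecule phi1 phix phiy phiz)).
by rewrite lerD2l tpair_tsub_molecule_ge.
Qed.

End SupportedTensor.
End Reweight.

Section LogCutoff.
Variable R : realType.

Definition clamp01 (w : R) : R := Num.min 1 (Num.max 0 w).

Lemma clamp01_ge0 w : 0 <= clamp01 w.
Proof. by rewrite /clamp01 le_min ler01 le_max lexx. Qed.

Lemma clamp01_le1 w : clamp01 w <= 1.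
Proof. by rewrite /clamp01 ge_min lexx. Qed.

Lemma clamp01_0 w : w <= 0 -> clamp01 w = 0.
Proof. by move=> w0; rewrite /clamp01 (max_l w0) (min_r ler01). Qed.

Lemma clamp01_1 w : 1 <= w -> clamp01 w = 1.
Proof. by move=> w1; rewrite /clamp01 (max_r (le_trans ler01 w1)) (min_l w1). Qed.

Lemma max_lip (c x y : R) : `|Num.max c x - Num.max c y| <= `|x - y|.
Proof.
have := lexx `|x - y|; rewrite {1}ler_norml => /andP[h2 h1].
rewrite ler_norml; case: (leP c x) => hx; case: (leP c y) => hy;
rewrite ?(max_r hx) ?(max_l (ltW hx)) ?(max_r hy) ?(max_l (ltW hy)); apply/andP; split; lra.
Qed.

Lemma min_lip (c x y : R) : `|Num.min c x - Num.min c y| <= `|x - y|.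
Proof.
have := lexx `|x - y|; rewrite {1}ler_norml => /andP[h2 h1].
rewrite ler_norml; case: (leP c x) => hx; case: (leP c y) => hy;
rewrite ?(min_l hx) ?(min_r (ltW hx)) ?(min_l hy) ?(min_r (ltW hy)); apply/andP; split; lra.
Qed.

Lemma clamp01_lip a b : `|clamp01 a - clamp01 b| <= `|a - b|.
Proof. exact: le_trans (min_lip _ _ _) (max_lip _ _ _). Qed.

Lemma ln_diff_le (a b : R) : 0 < b -> b <= a -> ln a - ln b <= (a - b) / b.
Proof.
move=> b0 ba; have a0 := lt_le_trans b0 ba.
rewrite -ln_div ?posrE //.
have -> : a / b = 1 + (a - b) / b by rewrite mulrBl mulfV ?gt_eqF // addrC subrK.
apply: le_ln1Dx; apply: lt_le_trans (ltrN10 R) _.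
by apply: divr_ge0 (ltW b0); rewrite subr_ge0.
Qed.

Definition log_cutoff (r kap c0 t : R) : R := clamp01 (kap * (ln (Num.max t r) - c0)).

Lemma log_cutoff_ge0 r kap c0 t : 0 <= log_cutoff r kap c0 t.
Proof. exact: clamp01_ge0. Qed.

Lemma log_cutoff_le1 r kap c0 t : log_cutoff r kap c0 t <= 1.
Proof. exact: clamp01_le1. Qed.

(* Logarithmic slope is what makes [log_cutoff (d q z) * F q] Lipschitz
   when [|F q| <= d q z]. *)
Lemma log_cutoff_lip (r kap c0 ta tb : R) : 0 < r -> 0 <= tb -> tb <= ta ->
  `|log_cutoff r kap c0 ta - log_cutoff r kap c0 tb| * tb <= `|kap| * (ta - tb).
Proof.
move=> r0 tb0 tba; rewrite /log_cutoff.
have [mb0 mab tbm dm] : [/\ 0 < Num.max tb r, Num.max tb r <= Num.max ta r,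
    tb <= Num.max tb r & Num.max ta r - Num.max tb r <= ta - tb].
  by case: (leP r ta) => ha; case: (leP r tb) => hb;
    rewrite ?(max_l ha) ?(max_r (ltW ha)) ?(max_l hb) ?(max_r (ltW hb)); split; lra.
set ma := Num.max ta r in mab dm *; set mb := Num.max tb r in mb0 mab tbm dm *.
have ma0 := lt_le_trans mb0 mab.
have lnab : ln mb <= ln ma by rewrite ler_ln ?posrE.
apply: le_trans (ler_wpM2r tb0 (clamp01_lip _ _)) _.
rewrite -mulrBr opprB addrA subrK normrM -mulrA ler_wpM2l // ger0_norm ?subr_ge0 //.
apply: le_trans (ler_wpM2r tb0 (ln_diff_le mb0 mab)) _.
rewrite mulrAC ler_pdivrMr // mulrC.
have : 0 <= ma - mb by rewrite subr_ge0.
nra.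
Qed.

Lemma ln_mul_expRV (r del : R) : 0 < r -> ln (r * expR del^-1) = ln r + del^-1.
Proof. by move=> r0; rewrite lnM ?posrE ?expR_gt0 // expRK. Qed.

Lemma le_mul_expRV (r del : R) : 0 < r -> 0 < del -> r <= r * expR del^-1.
Proof.
by move=> r0 del0; rewrite ler_peMr ?(ltW r0) // -expR0 ler_expR invr_ge0 ltW.
Qed.

Definition cutoff_down (r del : R) : R -> R := log_cutoff r (- del) (ln (r * expR del^-1)).

Definition cutoff_up (r del : R) : R -> R := log_cutoff r del (ln r).

Lemma cutoff_down_near (r del t : R) : 0 < r -> 0 < del -> t <= r ->
  cutoff_down r del t = 1.
Proof.
move=> r0 del0 tr; rewrite /cutoff_down /log_cutoff (max_r tr) ln_mul_expRV //.
apply: clamp01_1; rewrite opprD addrA subrr add0r mulrN mulNr opprK mulfV ?gt_eqF //.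
Qed.

Lemma cutoff_down_far (r del t : R) : 0 < r -> 0 < del -> r * expR del^-1 <= t ->
  cutoff_down r del t = 0.
Proof.
move=> r0 del0 rt; have rt' := le_trans (le_mul_expRV r0 del0) rt.
have r'0 : 0 < r * expR del^-1 by rewrite mulr_gt0 ?expR_gt0.
rewrite /cutoff_down /log_cutoff (max_l rt'); apply: clamp01_0.
rewrite mulNr oppr_le0 mulr_ge0 ?(ltW del0) // subr_ge0 ler_ln ?posrE //.
exact: lt_le_trans rt.
Qed.

Lemma cutoff_up_near (r del t : R) : 0 < r -> t <= r -> cutoff_up r del t = 0.
Proof.
by move=> r0 tr; rewrite /cutoff_up /log_cutoff (max_r tr) subrr mulr0 clamp01_0.
Qed.

Lemma cutoff_up_far (r del t : R) : 0 < r -> 0 < del -> r * expR del^-1 <= t ->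
  cutoff_up r del t = 1.
Proof.
move=> r0 del0 rt; have rt' := le_trans (le_mul_expRV r0 del0) rt.
have r'0 : 0 < r * expR del^-1 by rewrite mulr_gt0 ?expR_gt0.
rewrite /cutoff_up /log_cutoff (max_l rt'); apply: clamp01_1.
have : ln (r * expR del^-1) <= ln t by rewrite ler_ln ?posrE //; apply: lt_le_trans rt.
rewrite ln_mul_expRV // => h.
have : del * del^-1 <= del * (ln t - ln r) by rewrite ler_wpM2l ?(ltW del0) //; lra.
by rewrite mulfV ?gt_eqF.
Qed.

End LogCutoff.

Section CutoffLipschitz.
Variables (R : realType) (M : Type) (d : M -> M -> R) (base : M).
Hypothesis Hd : is_metric d.

Lemma cutoff_mul_lip (r kap c0 : R) (z : M) (F : M -> R) a b : 0 < r ->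
  (forall a b, `|F a - F b| <= d a b) -> (forall q, `|F q| <= d q z) ->
  `|log_cutoff r kap c0 (d a z) * F a - log_cutoff r kap c0 (d b z) * F b|
    <= (1 + `|kap|) * d a b.
Proof.
move=> r0 FL Fz.
wlog ba : a b / d b z <= d a z.
  move=> W; case: (lerP (d b z) (d a z)) => h; first exact: W.
  by rewrite distrC (metricC Hd a b); apply: W; apply: ltW.
have := log_cutoff_lip kap c0 r0 (metric_ge0 Hd b z) ba.
set pa := log_cutoff r kap c0 (d a z); set pb := log_cutoff r kap c0 (d b z) => Hp.
have -> : pa * F a - pb * F b = pa * (F a - F b) + (pa - pb) * F b by ring.
apply: le_trans (ler_normD _ _) _; rewrite !normrM mulrDl mul1r.
have pa0 : 0 <= pa by apply: log_cutoff_ge0.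
apply: lerD.
  rewrite ger0_norm //; apply: le_trans (ler_wpM2l pa0 (FL a b)) _.
  by rewrite ler_piMl ?(metric_ge0 Hd) ?log_cutoff_le1.
apply: le_trans (ler_wpM2l (normr_ge0 _) (Fz b)) _; apply: le_trans Hp _.
by rewrite ler_wpM2l // lerBlDr metric_triangle.
Qed.

Lemma lip_add_disjoint (A B : M -> R) (c : R) a b :
  (forall a b, `|A a - A b| <= c * d a b) -> (forall a b, `|B a - B b| <= c * d a b) ->
  (forall a b, B a != 0 -> A b != 0 -> `|A b| + `|B a| <= c * d a b) ->
  (forall q, B q != 0 -> A q = 0) ->
  `|(A a + B a) - (A b + B b)| <= c * d a b.
Proof.
move=> HA HB HX HD.
case: (eqVneq (B a) 0) => Ba; case: (eqVneq (B b) 0) => Bb.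
- by rewrite Ba Bb !addr0.
- rewrite Ba (HD _ Bb) addr0 add0r.
  case: (eqVneq (A a) 0) => Aa.
    by rewrite Aa sub0r normrN; have := HB a b; rewrite Ba sub0r normrN.
  by apply: le_trans (ler_normB _ _) _; rewrite (metricC Hd a b) HX.
- rewrite Bb (HD _ Ba) addr0 add0r.
  case: (eqVneq (A b) 0) => Ab.
    by rewrite Ab subr0; have := HB a b; rewrite Bb subr0.
  by rewrite distrC; apply: le_trans (ler_normB _ _) _; rewrite HX.
- by rewrite !HD // !add0r.
Qed.

Lemma reweight_contractive_of_lip (phi g : M -> R) (z : M) (del : R) : 0 <= del ->
  (phi base = 1 \/ z = base) -> g base = 0 ->
  (forall f, lip_ball d base f -> forall s : R, `|s| = 1 -> forall a b,
     `|(phi a * (f a - f z) + s * g a) - (phi b * (f b - f z) + s * g b)|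
       <= (1 + del) * d a b) ->
  reweight_contractive d base phi (cocutoff base phi) z g del.
Proof.
move=> del0 phiz g0 lipH f bf s s1.
have del1 : 0 < 1 + del by rewrite ltr_pwDl.
have shift q : phi q * f q + cocutoff base phi q * f z + s * g q =
    f z + (phi q * (f q - f z) + s * g q).
  rewrite /cocutoff; case: asboolP => [->|_]; last by ring.
  by case: phiz => [->|->]; rewrite bf.1 g0; ring.
split; first by rewrite shift bf.1 g0; case: phiz => [->|->]; rewrite ?bf.1; ring.
move=> a b; rewrite -mulrBr normrM gtr0_norm ?invr_gt0 // !shift.
by rewrite opprD addrACA subrr add0r ler_pdivrMl // lipH.
Qed.

Lemma cutoff_bump_lip (r kap c0 : R) (z : M) (g : M -> R) (del : R) :
  0 < r -> `|kap| <= del ->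
  (forall a b, `|g a - g b| <= d a b) ->
  (forall a b, g a != 0 -> log_cutoff r kap c0 (d b z) != 0 ->
     `|g a| + d b z <= (1 + del) * d a b) ->
  (forall q, g q != 0 -> log_cutoff r kap c0 (d q z) = 0) ->
  forall f, lip_ball d base f -> forall s : R, `|s| = 1 -> forall a b,
    `|(log_cutoff r kap c0 (d a z) * (f a - f z) + s * g a) -
      (log_cutoff r kap c0 (d b z) * (f b - f z) + s * g b)| <= (1 + del) * d a b.
Proof.
move=> r0 kapdel glip gsep gsupp f [_ fL] s s1 a b.
have del0 : 0 <= del := le_trans (normr_ge0 _) kapdel.
have le_dil a' b' : d a' b' <= (1 + del) * d a' b'.
  by rewrite ler_peMl ?(metric_ge0 Hd) // lerDl.
set phi := fun q => log_cutoff r kap c0 (d q z).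
have FL a' b' : `|(f a' - f z) - (f b' - f z)| <= d a' b'.
  by rewrite opprB addrA subrK.
have Fz q : `|f q - f z| <= d q z by [].
apply: (lip_add_disjoint (A := fun q => phi q * (f q - f z)) (B := fun q => s * g q)).
- move=> a' b'; apply: le_trans (@cutoff_mul_lip r kap c0 z _ a' b' r0 FL Fz) _.
  by rewrite ler_wpM2r ?(metric_ge0 Hd) // lerD2l.
- move=> a' b'; rewrite -mulrBr normrM s1 mul1r.
  exact: le_trans (glip _ _) (le_dil _ _).
- move=> a' b' /[!mulf_eq0] /[!negb_or] /andP[_ ga'] /andP[phib' _].
  rewrite !normrM s1 mul1r ger0_norm ?log_cutoff_ge0 // addrC.
  apply: le_trans (gsep _ _ ga' phib'); rewrite lerD2l -[leRHS]mul1r.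
  by apply: ler_pM; rewrite ?log_cutoff_ge0 ?log_cutoff_le1 ?Fz.
- move=> q; rewrite mulf_eq0 negb_or => /andP[_ /gsupp].
  by rewrite /phi => ->; rewrite mul0r.
Qed.

End CutoffLipschitz.

Section Molecules.
Variables (R : realType) (M : Type) (d : M -> M -> R) (base : M).
Hypothesis Hd : is_metric d.
Variable X : normedModType R.
Local Notation pn := (@proj_norm R M d base X).
Variables (P : M -> Prop) (u : seq (M * X)) (e : X) (del : R).
Hypotheses (Pbase : P base) (Pu : all (fun k => `[< P k.1 >]) u).
Hypotheses (e1 : `|e| = 1) (del0 : 0 < del) (del1 : del <= 1).

Lemma far_cutoff_contractive (D : R) : 0 < D ->
  reweight_contractive d base (fun q => cutoff_down D del (d q base))
    (cocutoff base (fun q => cutoff_down D del (d q base))) base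
    (fun q => Num.max 0 (d q base - 2 * (D * expR del^-1))) del.
Proof.
move=> D0; set R' := D * expR del^-1.
have R'0 : 0 < R' by rewrite mulr_gt0 ?expR_gt0.
set phi := fun q => cutoff_down D del (d q base).
set g := fun q => Num.max 0 (d q base - 2 * R').
have gpos q : g q != 0 -> 2 * R' < d q base /\ g q = d q base - 2 * R'.
  rewrite /g; case: (lerP (d q base) (2 * R')) => h; first by rewrite max_l ?eqxx //; lra.
  by rewrite max_r //; lra.
have phi0 q : R' <= d q base -> phi q = 0 by apply: cutoff_down_far.
apply: reweight_contractive_of_lip; [exact: ltW | by right |
  by rewrite /g (metricxx Hd) max_l //; lra |].
apply: (cutoff_bump_lip Hd (r := D)) => //; first by rewrite normrN ger0_norm // ltW.
- move=> a b; apply: le_trans (max_lip _ _ _) _.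
  by rewrite opprB addrA subrK (metric_lip Hd).
- move=> a b /gpos [ha ->] phib; rewrite ger0_norm; last lra.
  have hb : d b base < R' by rewrite ltNge; apply: contra phib => /phi0/eqP.
  have := metric_triangle Hd a b base; have := mulr_ge0 (ltW del0) (metric_ge0 Hd a b).
  lra.
- by move=> q /gpos [h _]; apply: phi0; lra.
Qed.

Lemma proj_norm_tsub_far_molecule (D : R) (x : M) :
  0 < D -> (forall s, P s -> d s base <= D) ->
  2 * (D * expR del^-1) / del <= d x base ->
  pn u + (1 - del) <= (1 + del) * pn (tsub u (molecule d x base e)).
Proof.
move=> D0 PD xfar; set R' := D * expR del^-1 in xfar.
have DR' : D <= R' := le_mul_expRV D0 del0.
have R'x : 2 * R' <= del * d x base.
  by move: xfar; rewrite ler_pdivrMr // [d x base * _]mulrC.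
have R'x' : 2 * R' <= d x base := le_trans R'x (ler_piMl (metric_ge0 Hd _ _) del1).
have nPx : ~ P x by move=> /PD ?; lra.
have xb : x <> base by move=> E; apply: nPx; rewrite E.
pose g q := Num.max 0 (d q base - 2 * R').
have g0 s : P s -> g s = 0 by move=> /PD Ds; rewrite /g max_l //; lra.
apply: (proj_norm_tsub_molecule_ge Hd Pbase Pu (y := base) (z := base) nPx
  (fun _ => erefl) (ltW del0) del1 e1 xb _ _ _ _ g0 _ (far_cutoff_contractive D0)) => //.
- by move=> s /PD Ds _; rewrite cutoff_down_near.
- by apply: cutoff_down_far => //; rewrite -/R'; lra.
- rewrite (g0 _ Pbase) subr0 /g le_max; apply/orP; right; nra.
Qed.

Lemma le_mul3_div (a : R) : 0 <= a -> a <= 3 * a / del.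
Proof.
move=> a0; rewrite ler_pdivlMr //.
have : del * a <= a by rewrite ler_piMl.
lra.
Qed.

Lemma short_cutoff_contractive (x z : M) (t : R) : 0 < t -> t <= d base x ->
  (base <> z -> 3 * (d x z + t) / del * expR del^-1 <= d base z) ->
  reweight_contractive d base (fun q => cutoff_up (3 * (d x z + t) / del) del (d q z))
    (cocutoff base (fun q => cutoff_up (3 * (d x z + t) / del) del (d q z))) z
    (fun q => Num.max 0 (t - d q x)) del.
Proof.
move=> t0 tbase zfar.
set r0 := d x z + t; have r0E : r0 = d x z + t by [].
have r00 : 0 < r0 by have := metric_ge0 Hd x z; lra.
set r := 3 * r0 / del in zfar *.
have delr : del * r = 3 * r0 by rewrite /r [del * _]mulrC divfK ?gt_eqF.
have r0r : r0 <= r := le_mul3_div (ltW r00).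
have r0' : 0 < r by lra.
set phi := fun q => cutoff_up r del (d q z).
set g := fun q => Num.max 0 (t - d q x).
have gpos q : g q != 0 -> d q x < t /\ g q = t - d q x.
  rewrite /g; case: (lerP t (d q x)) => h; first by rewrite max_l ?eqxx // subr_le0.
  by rewrite max_r // subr_ge0 ltW.
have phi0 q : d q z <= r -> phi q = 0 by move=> h; rewrite /phi cutoff_up_near.
apply: reweight_contractive_of_lip; [exact: ltW | |
  by rewrite /g max_l // subr_le0 |].
  case: (asboolP (z = base)) => [zb|zb]; first by right.
  by left; rewrite /phi cutoff_up_far // zfar // => E; apply: zb; rewrite E.
apply: (cutoff_bump_lip Hd (r := r)) => //; first by rewrite ger0_norm // ltW.
- move=> a b; apply: le_trans (max_lip _ _ _) _.
  by rewrite opprB addrC addrA subrK (metricC Hd a b) (metric_lip Hd).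
- move=> a b /gpos [ha ->] phib; rewrite ger0_norm; last lra.
  have hb : r < d b z by rewrite ltNge; apply: contra phib => /phi0/eqP.
  have := metric_triangle Hd b a z; have := metric_triangle Hd a x z.
  rewrite (metricC Hd b a) => hax hba.
  have /(ler_wpM2l (ltW del0)) : r - r0 <= d a b by lra.
  have : del * r0 <= r0 by rewrite ler_piMl // ltW.
  rewrite mulrBr delr; lra.
- move=> q /gpos [h _]; apply: phi0.
  by apply: le_trans (metric_triangle Hd q x z) _; lra.
Qed.

(* [z] is either [x] itself or the point of the support nearest to [x]. *)
Lemma proj_norm_tsub_short_molecule (x y z : M) :
  x <> y -> ~ P x -> (P y -> y = z) ->
  (forall s, P s -> s <> z -> 3 * (d x z + d x y) / del * expR del^-1 <= d s z) ->
  (forall s, P s -> d x y <= d s x) ->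
  pn u + (1 - del) <= (1 + del) * pn (tsub u (molecule d x y e)).
Proof.
move=> xy nPx Pyz Pfar Pnear; have t0 := metric_gt0 Hd xy.
have dxz0 := metric_ge0 Hd x z.
have r0r := le_mul3_div (addr_ge0 dxz0 (ltW t0)).
set r := 3 * (d x z + d x y) / del in Pfar r0r.
have r0 : 0 < r by lra.
have phi0 q : d q z <= r -> cutoff_up r del (d q z) = 0.
  by move=> h; rewrite cutoff_up_near.
pose g q := Num.max 0 (d x y - d q x).
have g0 s : P s -> g s = 0 by move=> /Pnear h; rewrite /g max_l // subr_le0.
have contr := short_cutoff_contractive t0 (Pnear _ Pbase) (Pfar _ Pbase).
apply: (proj_norm_tsub_molecule_ge Hd Pbase Pu nPx Pyz (ltW del0) del1 e1 xy
  _ _ _ _ g0 _ contr).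
- by move=> s Ps sz; rewrite cutoff_up_far //; apply: Pfar.
- by apply: phi0; lra.
- move=> _; apply: phi0; apply: le_trans (metric_triangle Hd y x z) _.
  by rewrite (metricC Hd y x); lra.
- by move=> _; apply: phi0; rewrite (metricxx Hd) ltW.
- rewrite /g (metricxx Hd) subr0 (metricC Hd y x) subrr maxxx (max_r (ltW t0)) subr0.
  by rewrite ler_piMl ?(ltW t0) // gerBl ltW.
Qed.

End Molecules.

Section FinitePointSets.
Variables (R : realType) (M : Type) (d : M -> M -> R).
Hypothesis Hd : is_metric d.
Implicit Types L : seq {classic M}.

Lemma seq_dist_bounded L c : exists D, 0 < D /\ forall s, s \in L -> d s c <= D.
Proof.
elim: L => [|a L [D [D0 HD]]]; first by exists 1.
exists (Num.max D (d a c)); split; first by rewrite lt_max D0.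
by move=> s; rewrite inE => /orP[/eqP ->|/HD sL]; rewrite le_max ?lexx ?orbT ?sL.
Qed.

Lemma seq_dist_separated_from L a : exists sa, 0 < sa /\
  forall b, b \in L -> a <> b -> sa <= d a b.
Proof.
elim: L => [|b L [s [s0 Hs]]]; first by exists 1.
case: (eqVneq a b) => [<-|ab].
  by exists s; split=> // c; rewrite inE => /orP[/eqP-> /(_ erefl)//|/Hs].
exists (Num.min s (d a b)); split; first by rewrite lt_min s0 metric_gt0 //; apply/eqP.
by move=> c; rewrite inE => /orP[/eqP-> _|/Hs h /h]; rewrite ge_min ?lexx ?orbT // => ->.
Qed.

Lemma seq_dist_separated L : exists sg, 0 < sg /\
  forall a b, a \in L -> b \in L -> a <> b -> sg <= d a b.
Proof.
elim: L => [|a L [sg [sg0 Hsg]]]; first by exists 1.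
have [sa [sa0 Ha]] := seq_dist_separated_from L a.
exists (Num.min sg sa); split; first by rewrite lt_min sg0.
move=> b c; rewrite !inE => /orP[/eqP->|bL] /orP[/eqP->|cL] bc //.
- by rewrite ge_min Ha ?orbT.
- by rewrite ge_min (metricC Hd) Ha ?orbT // => E; apply: bc.
- by rewrite ge_min Hsg.
Qed.

Lemma seq_nearest L a x : a \in L ->
  exists s, s \in L /\ forall b, b \in L -> d x s <= d x b.
Proof.
elim: L a => [//|b L IH] a; rewrite inE => _.
case: L IH => [_|c L IH].
  by exists b; split=> [|e]; rewrite ?mem_seq1 // => /eqP->.
have [s [sL Hs]] := IH c (mem_head _ _).
case: (lerP (d x s) (d x b)) => h.
  by exists s; split=> [|e]; rewrite inE ?sL ?orbT // => /orP[/eqP->|/Hs].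
exists b; split=> [|e]; first exact: mem_head.
by rewrite inE => /orP[/eqP->//|/Hs]; apply: le_trans (ltW h).
Qed.

Lemma exists_short_pair_off L a t0 : ~ uniformly_discrete d -> a \in L -> 0 < t0 ->
  exists w y : {classic M}, [/\ w <> y, w \notin L, d w y < t0 &
    forall s, s \in L -> d w y <= d w s].
Proof.
move=> not_discrete aL t00; have [sg [sg0 Lsep]] := seq_dist_separated L.
have [a' [b [ab dab]]] : exists a b, a <> b /\ d a b < Num.min t0 sg.
  apply: contrapT => H; apply: not_discrete; exists (Num.min t0 sg).
  split=> [|a' b ab]; first by rewrite lt_min t00.
  by rewrite leNgt; apply/negP => h; apply: H; exists a', b.
move: dab; rewrite lt_min => /andP[dab dab'].
have [w [w' [ww' nLw dww']]] : exists w w' : {classic M},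
    [/\ w <> w', w \notin L & d w w' < t0].
  case: (boolP (a' \in L)) => La; last by exists a', b.
  case: (boolP (b \in L)) => Lb.
    by have := Lsep _ _ La Lb ab; rewrite leNgt dab'.
  by exists b, a'; rewrite (metricC Hd b a'); split=> // E; apply: ab; rewrite E.
have [sw [Lsw Hsw]] := seq_nearest w aL.
case: (lerP (d w w') (d w sw)) => h.
  by exists w, w'; split=> // s /Hsw; apply: le_trans.
exists w, sw; split=> //; last exact: lt_trans dww'.
by move=> E; move: nLw; rewrite E Lsw.
Qed.

End FinitePointSets.

Section AlmostOrthogonalMolecule.
Variables (R : realType) (M : Type) (d : M -> M -> R) (base : M).
Hypothesis Hd : is_metric d.
Variable X : normedModType R.
Local Notation pn := (@proj_norm R M d base X).
Variables (L : seq {classic M}) (e : X) (del : R).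
Hypotheses (Lbase : (base : {classic M}) \in L) (e1 : `|e| = 1).
Hypotheses (del0 : 0 < del) (del1 : del <= 1).

Let inL (s : M) : Prop := (s : {classic M}) \in L.

Definition supported_in (u : seq (M * X)) : Prop := all (fun k => `[< inL k.1 >]) u.

Definition almost_orthogonal (v : seq (M * X)) : Prop :=
  forall u, supported_in u -> pn u + (1 - del) <= (1 + del) * pn (tsub u v).

Lemma exists_far_molecule : ~ bounded_metric d ->
  exists v, pn v = 1 /\ almost_orthogonal v.
Proof.
move=> unbounded; have [D [D0 HD]] := seq_dist_bounded d L base.
set K := 2 * (D * expR del^-1) / del.
have [x Kx] : exists x, K < d x base.
  apply: contrapT => Kd; apply: unbounded; exists (K + K) => a b.
  have le_K c : d c base <= K by rewrite leNgt; apply/negP => h; apply: Kd; exists c.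
  by apply: le_trans (metric_triangle Hd a base b) _; rewrite (metricC Hd base b) lerD.
have xb : x <> base.
  move=> E; move: Kx; rewrite E (metricxx Hd) ltNge; apply/negP/negPn.
  by rewrite !mulr_ge0 ?invr_ge0 ?expR_ge0 ?ltW.
exists (molecule d x base e); split; first exact: proj_norm_molecule.
move=> u Lu.
exact: (proj_norm_tsub_far_molecule Hd (P := inL) Lbase Lu e1 del0 del1 D0 HD (ltW Kx)).
Qed.

(* For a pair [w, y] with [d w y << sg], [w] outside [L]: either [w] is far from
   [L] compared to [d w y] (take [z = w]), or [y] and [z] must both be the point
   of [L] nearest to [w]. *)
Lemma exists_short_molecule : ~ uniformly_discrete d ->
  exists v, pn v = 1 /\ almost_orthogonal v.
Proof.
move=> not_discrete.
set K := 3 / del * expR del^-1.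
have K3 : 3 <= K.
  have exp_ge1 : 1 <= expR del^-1 by rewrite -expR0 ler_expR invr_ge0 ltW.
  have ge3 : 3 <= 3 / del by rewrite ler_pdivlMr // ler_piMr.
  rewrite /K; nra.
have Kexp r : 3 * r / del * expR del^-1 = K * r by rewrite /K; ring.
have [sg [sg0 Lsep]] := seq_dist_separated Hd L.
set t0 := sg / (K * (K + 1)).
have KK0 : 0 < K * (K + 1) by apply: mulr_gt0; lra.
have Kt0 : K * (K + 1) * t0 = sg by rewrite mulrC divfK ?gt_eqF.
have t00 : 0 < t0 by rewrite divr_gt0.
have [w [y [wy /negP nLw t0y Ly]]] := exists_short_pair_off Hd not_discrete Lbase t00.
have [sw [Lsw Hsw]] := seq_nearest d w Lbase.
have dwy0 := metric_gt0 Hd wy.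
exists (molecule d w y e); split; first exact: proj_norm_molecule.
move=> u Lu; case: (lerP (K * d w y) (d w sw)) => far.
  apply: (proj_norm_tsub_short_molecule Hd (P := inL) Lbase Lu e1 del0 del1 (z := w)
    wy nLw).
  - by rewrite /inL => /Hsw ?; exfalso; nra.
  - move=> s; rewrite /inL => Ls _; rewrite (metricxx Hd) add0r Kexp.
    by apply: le_trans far _; rewrite (metricC Hd s w); apply: Hsw.
  - by move=> s; rewrite /inL (metricC Hd s) => /Ly.
apply: (proj_norm_tsub_short_molecule Hd (P := inL) Lbase Lu e1 del0 del1 (z := sw) wy nLw).
- rewrite /inL => Lyy; apply: contrapT => ysw.
  have := Lsep _ _ Lyy Lsw ysw; have := metric_triangle Hd y w sw.
  by rewrite (metricC Hd y w); nra.
- by move=> s; rewrite /inL => Ls ssw; rewrite Kexp; have := Lsep _ _ Ls Lsw ssw; nra.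
- by move=> s; rewrite /inL (metricC Hd s) => /Ly.
Qed.

Lemma exists_almost_orthogonal_molecule : ~ (bounded_metric d /\ uniformly_discrete d) ->
  exists v, pn v = 1 /\ almost_orthogonal v.
Proof.
move=> H; case: (asboolP (bounded_metric d)) => [bd|unbd].
  by apply: exists_short_molecule => ud; apply: H.
exact: exists_far_molecule.
Qed.

End AlmostOrthogonalMolecule.

Lemma cvgn_of_cauchy (R : realType) (a : nat -> R) :
  (forall e : R, 0 < e -> exists N : nat, forall m n : nat,
    (N <= m)%N -> (N <= n)%N -> `|a m - a n| < e) -> cvgn a.
Proof.
move=> Ha; suff : cauchy_ex (a @ \oo) by move/cauchy_exP/cauchy_cvg.
move=> e e0; rewrite /fmapE -ball_normE /ball_.
by have [N HN] := Ha e e0; exists (a N), N => // m Nm; apply: HN.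
Qed.

Section Completion.
Variables (R : realType) (M : Type) (d : M -> M -> R) (base : M).
Hypothesis Hd : is_metric d.
Variable X : normedModType R.
Local Notation pn := (@proj_norm R M d base X).
Local Notation is_cauchy := (cauchy_seq (@tsub M X) pn).

Lemma cvgn_proj_norm (x : nat -> seq (M * X)) : is_cauchy x -> cvgn (fun m => pn (x m)).
Proof.
move=> cx; apply: cvgn_of_cauchy => e e0; have [N HN] := cx e e0.
by exists N => m k Nm Nk; apply: le_lt_trans (proj_norm_dist base Hd _ _) (HN _ _ Nm Nk).
Qed.

Lemma cvgn_proj_norm_tsub (x : nat -> seq (M * X)) v :
  is_cauchy x -> cvgn (fun m => pn (tsub (x m) v)).
Proof.
move=> cx; apply: cvgn_of_cauchy => e e0; have [N HN] := cx e e0.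
exists N => m k Nm Nk; apply: le_lt_trans (HN _ _ Nm Nk).
have := proj_norm_tsub_triangle base Hd (x m) (x k) v.
have := proj_norm_tsub_triangle base Hd (x k) (x m) v.
by rewrite (proj_norm_tsubC base Hd (x k) (x m)) ler_norml => ? ?; apply/andP; split; lra.
Qed.

Lemma near_unit_cauchy (x : nat -> seq (M * X)) (eta : R) :
  is_cauchy x -> cnorm pn x = 1 -> 0 < eta ->
  \forall m \near \oo, 1 - eta <= pn (x m) /\
    forall k, (m <= k)%N -> pn (tsub (x m) (x k)) < eta.
Proof.
move=> cx x1 eta0; have [N1 HN1] := cx eta eta0.
have : (fun m => pn (x m)) @ \oo --> (1 : R) by rewrite -x1; apply: cvgn_proj_norm.
move=> /cvgrPdist_lt /(_ eta eta0) [N2 _ HN2].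
exists (maxn N1 N2) => // m /= Nm; split.
  by have := HN2 m (leq_trans (leq_maxr _ _) Nm); rewrite ltr_norml => /andP[_ ?]; lra.
move=> k mk; have N1m := leq_trans (leq_maxl _ _) Nm.
exact: HN1 _ _ N1m (leq_trans N1m mk).
Qed.

(* The witness is a constant sequence, chosen against the truncations [x i N]. *)
Lemma octahedral_of_dense :
  (forall (n : nat) (u : 'I_n -> seq (M * X)) (del : R), 0 < del -> del <= 1 ->
     exists v, pn v = 1 /\
       forall i, pn (u i) + (1 - del) <= (1 + del) * pn (tsub (u i) v)) ->
  octahedral_free_ptensor d base X.
Proof.
move=> dense n x xP eps eps0.
set eta := Num.min eps 1 / 8.
have eta0 : 0 < eta by rewrite divr_gt0 // lt_min eps0 ltr01.
have eta1 : eta <= 1 by rewrite ler_pdivrMr // mul1r ge_min ler1n orbT.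
have etae : 8 * eta <= eps by rewrite mulrC divfK // ge_min lexx.
have [N _ HN] : \forall m \near \oo, forall i, 1 - eta <= pn (x i m) /\
    forall k, (m <= k)%N -> pn (tsub (x i m) (x i k)) < eta.
  by apply: filter_forall => i; apply: near_unit_cauchy; case: (xP i).
have [v [v1 Hv]] := dense n (fun i => x i N) eta eta0 eta1.
exists (fun _ => v); split.
- by move=> e e0; exists 0%N => m k _ _; rewrite proj_norm_tsubxx.
- by rewrite /cnorm lim_cst.
move=> i; apply: limr_ge; first exact: cvgn_proj_norm_tsub (xP i).1.
exists N => // m /= Nm; have [xN1 xNm] := HN N (leqnn N) i.
have := Hv i; have := xNm m Nm.
have := proj_norm_tsub_triangle base Hd (x i N) (x i m) v.
set am := pn (tsub (x i m) v); set aN := pn (tsub (x i N) v) => h3 h1 h2.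
have h4 : (1 + eta) * aN <= (1 + eta) * (eta + am) by rewrite ler_pM2l; lra.
have : 2 - 8 * eta <= am by rewrite -(@ler_pM2l _ (1 + eta)); nra.
lra.
Qed.

End Completion.

Theorem theorem1p2 (R : realType) (M : Type) (d : M -> M -> R) (base : M) :
  is_metric d ->
  ~ (bounded_metric d /\ uniformly_discrete d) ->
  forall X : completeNormedModType R, (exists x : X, x != 0) ->
  octahedral_free_ptensor d base X.
Proof.
move=> Hd not_bd_ud X [x0 x00].
have e1 : `|(`|x0|^-1 *: x0)| = 1 by rewrite normrZ normfV normr_id mulVf ?normr_eq0.
apply: (octahedral_of_dense Hd) => n u del del0 del1.
pose L : seq {classic M} :=
  base :: flatten [seq [seq (k.1 : {classic M}) | k <- u i] | i <- enum 'I_n].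
have [v [v1 Hv]] := exists_almost_orthogonal_molecule Hd (L := L) (mem_head _ _) e1
  del0 del1 not_bd_ud.
exists v; split=> // i; apply: Hv.
have uiL : {subset [seq (k.1 : {classic M}) | k <- u i] <= L}.
  move=> s si; rewrite inE; apply/orP; right.
  by apply/flatten_mapP; exists i; rewrite ?mem_enum.
rewrite /supported_in (eq_all (fun k => asboolb _)).
by rewrite -(all_map (fun k => k.1 : {classic M}) (mem L)); apply/allP.
Qed.
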